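(* Let $G_0$ be a fixed $n\times l$ binary matrix, $G_1$ a fixed $n\times k$ binary matrix, $\mathbf m\in\{0,1\}^k$ fixed, $t_0=\lfloor (d_0-1)/2\rfloor$, and $1\le u\le n$. Then $$P(E=0\mid U=u)\;\begin{cases}=0, & u<d_0,\\[2pt] =\dfrac12\cdot\dfrac{\sum_{w=d_0}^{u}B_{0,w}\binom{n-w}{u-w}}{\binom nu}, & d_0\le u\le d_0+t_0,\\[6pt] \le \min\left\{\dfrac{\sum_{w=d_0}^{u}B_{0,w}\binom{n-w}{u-w}}{\binom nu},1\right\}, & u>d_0+t_0.\end{cases}$$
   Context: All arithmetic is over $\mathrm{GF}(2)$. $\mathcal C_0^{\perp}=\{\mathbf x\in\{0,1\}^n: G_0^T\mathbf x=\mathbf 0\}$; $B_{0,w}$ is the number of vectors of Hamming weight $w$ in $\mathcal C_0^\perp$, and $d_0$ is the minimum Hamming weight of a nonzero vector of $\mathcal C_0^\perp$. Defect model: each of the $n$ memory cells is independently defective with probability $\beta\in(0,1)$; a defective cell is stuck at $0$ or at $1$, each with probability $1/2$, independently. Let $\mathcal U$ be the set of defect positions, $U=|\mathcal U|$, $\mathbf s^{\mathcal U}$ the vector of stuck-at values; conditionally on $U=u$, $\mathcal U$ is a uniform random $u$-subset and $\mathbf s^{\mathcal U}$ is uniform on $\{0,1\}^u$. For a matrix $M$ (resp. vector $\mathbf v$) with rows indexed by $\{1,\dots,n\}$, $M^{\mathcal U}$ (resp. $\mathbf v^{\mathcal U}$) denotes the rows indexed by $\mathcal U$. Encoding: with $\mathbf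 b^{\mathcal U}=(G_1\mathbf m)^{\mathcal U}+\mathbf s^{\mathcal U}$, look for $\mathbf d\in\{0,1\}^l$ with $G_0^{\mathcal U}\mathbf d=\mathbf b^{\mathcal U}$; $E=1$ if such $\mathbf d$ exists and $E=0$ (encoding failure) otherwise. *)

From HB Require Import structures.
From mathcomp Require Import all_boot all_order all_algebra.
Set Implicit Arguments. Unset Strict Implicit. Unset Printing Implicit Defensive.
Import Order.TTheory GRing.Theory Num.Theory.
Local Open Scope ring_scope.

Definition wt (n : nat) (x : 'cV['F_2]_n) : nat := #|[set i : 'I_n | x i 0 != 0]|.

Definition in_dual (n l : nat) (G0 : 'M['F_2]_(n, l)) (x : 'cV['F_2]_n) : bool :=
  G0^T *m x == 0.

Definition B0 (n l : nat) (G0 : 'M['F_2]_(n, l)) (w : nat) : nat :=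
  #|[set x : 'cV['F_2]_n | in_dual G0 x && (wt x == w)]|.

(* s is a stuck-at pattern on the defect set S: its entries outside S are 0,
   so such s are in bijection with {0,1}^S. *)
Definition stuck_on (n : nat) (S : {set 'I_n}) (s : 'cV['F_2]_n) : bool :=
  [forall i : 'I_n, (i \notin S) ==> (s i 0 == 0)].

(* E = 1 : exists d with G0^U d = (G1 m)^U + s^U *)
Definition encodable (n l k : nat) (G0 : 'M['F_2]_(n, l)) (G1 : 'M['F_2]_(n, k))
  (m : 'cV['F_2]_k) (S : {set 'I_n}) (s : 'cV['F_2]_n) : bool :=
  [exists d : 'cV['F_2]_l,
     [forall i in S, (G0 *m d) i 0 == (G1 *m m) i 0 + s i 0]].

Definition fail_count (n l k : nat) (G0 : 'M['F_2]_(n, l)) (G1 : 'M['F_2]_(n, k))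
  (m : 'cV['F_2]_k) (u : nat) : nat :=
  \sum_(S : {set 'I_n} | #|S| == u)
     #|[set s : 'cV['F_2]_n | stuck_on S s & ~~ encodable G0 G1 m S s]|.

(* P(E = 0 | U = u): U uniform u-subset, s^U uniform on {0,1}^u *)
Definition P_fail (n l k : nat) (G0 : 'M['F_2]_(n, l)) (G1 : 'M['F_2]_(n, k))
  (m : 'cV['F_2]_k) (u : nat) : rat :=
  (fail_count G0 G1 m u)%:R / ('C(n, u) * 2 ^ u)%:R.

Definition ratio_bound (n l : nat) (G0 : 'M['F_2]_(n, l)) (d0 u : nat) : rat :=
  (\sum_(d0 <= w < u.+1) B0 G0 w * 'C(n - w, u - w))%:R / ('C(n, u))%:R.

(* Encoding fails on the defect set S with stuck values s exactly when some
   dual codeword z supported in S has parity z^T (G1 m + s) = 1 (Fredholm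
   alternative on the rows of G0 indexed by S).  So failure needs a nonzero
   dual word inside S, which is impossible when |S| < d0.  When 2|S| < 3 d0
   there is at most one such word, since two of them and their difference
   would have total weight at least 3 d0 but at most 2|S|; flipping one stuck
   value on its support is then a bijection between failing and succeeding
   patterns, so exactly half of the 2^|S| patterns fail.  In general at most
   2^|S| times the number of such words fail.  Finally, counting the pairs
   (S, z) with |S| = u and supp z in S gives sum_w B_{0,w} C(n-w, u-w). *)

From HB Require Import structures.
From mathcomp Require Import all_boot all_order all_algebra.
From mathcomp Require Import zify ring.
Set Implicit Arguments. Unset Strict Implicit. Unset Printing Implicit Defensive.
Import Order.TTheory GRing.Theory Num.Theory.
Local Open Scope ring_scope.

Lemma F2_cases (x : 'F_2) : x = 0 \/ x = 1.
Proof. by case: x => [[|[|i]]] lt_i2; [left|right|]; try apply/val_inj. Qed.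

Lemma fredholm_alternative (F : fieldType) p q (A : 'M[F]_(p, q)) (c : 'cV[F]_p) :
  (forall d : 'cV_q, A *m d != c) ->
  exists2 v : 'cV[F]_p, A^T *m v = 0 & (c^T *m v) 0 0 != 0.
Proof.
move=> unsolvable.
have nz : c^T *m cokermx A^T != 0.
  rewrite -submxE; apply/submxP => -[D eqD]; move: (unsolvable D^T).
  by rewrite -[c]trmxK eqD trmx_mul trmxK eqxx.
have [j nz_j] : exists j, (c^T *m cokermx A^T) 0 j != 0.
  apply/existsP; apply: contraR nz => /existsPn zero.
  by apply/eqP/matrixP => i j; rewrite ord1 [in RHS]mxE; apply/eqP/negPn; exact: zero.
exists (col j (cokermx A^T)); rewrite colE mulmxA ?mulmx_coker ?mul0mx //.
by rewrite -colE mxE.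
Qed.

Lemma card_indicator (T : finType) (A : {set T}) : #|A| = (\sum_x (x \in A : nat))%N.
Proof. by rewrite -sum1_card big_mkcond. Qed.

Section Support.
Variable n : nat.
Implicit Types (z s : 'cV['F_2]_n) (S : {set 'I_n}).

Definition supp z : {set 'I_n} := [set i | z i 0 != 0].

Lemma wtE z : wt z = #|supp z|. Proof. by []. Qed.

Lemma supp0 : supp (0 : 'cV['F_2]_n) = set0.
Proof. by apply/setP => i; rewrite !inE mxE eqxx. Qed.

Lemma supp_inj : injective supp.
Proof.
move=> s s' eq_supp; apply/matrixP => i j; rewrite ord1.
have := congr1 (fun A : {set 'I_n} => i \in A) eq_supp; rewrite /= !inE.
by case: (F2_cases (s i 0)) => ->; case: (F2_cases (s' i 0)) => ->.
Qed.

Lemma notin_supp z S i : supp z \subset S -> i \notin S -> z i 0 = 0.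
Proof. by move=> /subsetP zS; apply: contraNeq => nz; apply: zS; rewrite inE. Qed.

Lemma stuck_onE S s : stuck_on S s = (supp s \subset S).
Proof.
apply/forallP/subsetP => [stuck i | sS i]; last first.
  by apply/implyP => iS; apply/eqP; move: iS; apply: contraNeq => nz; apply: sS; rewrite inE.
by rewrite inE; apply: contraR => iS; move/implyP: (stuck i) => /(_ iS).
Qed.

Lemma card_stuck_on S : #|[set s | stuck_on S s]| = (2 ^ #|S|)%N.
Proof.
rewrite -card_powerset -(card_imset _ supp_inj); apply: eq_card => A.
rewrite powersetE; apply/imsetP/idP => [[s] | AS].
  by rewrite inE stuck_onE => sS ->.
exists (\col_i (if i \in A then 1 else 0)).
  rewrite inE stuck_onE; apply: subset_trans AS; apply/subsetP => i.
  by rewrite inE mxE; case: (i \in A).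
by apply/setP => i; rewrite inE mxE; case: (i \in A).
Qed.

Lemma wt_le_card z S : supp z \subset S -> (wt z <= #|S|)%N.
Proof. exact: subset_leq_card. Qed.

Lemma wt_triangle z1 z2 S : supp z1 \subset S -> supp z2 \subset S ->
  (wt z1 + wt z2 + wt (z1 - z2) <= 2 * #|S|)%N.
Proof.
move=> z1S z2S; rewrite !wtE !card_indicator -!big_split big_distrr /=.
apply: leq_sum => i _; rewrite !inE !mxE.
have [iS|iS] := boolP (i \in S); last by rewrite (notin_supp z1S iS) (notin_supp z2S iS) subrr.
by case: (F2_cases (z1 i 0)) => ->; case: (F2_cases (z2 i 0)) => ->.
Qed.

End Support.

Lemma card_supersets (T : finType) (A : {set T}) u : (#|A| <= u)%N ->
  #|[set S : {set T} | (#|S| == u) && (A \subset S)]| = 'C(#|T| - #|A|, u - #|A|).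
Proof.
move=> le_Au; have cardCA : #|~: A| = (#|T| - #|A|)%N by rewrite cardsCs setCK.
rewrite -cardCA -cards_draws.
rewrite -(@card_in_imset _ _ (fun S => S :\: A)) => [|S1 S2]; last first.
  rewrite !inE => /andP [_ AS1] /andP [_ AS2] eqD.
  by rewrite -(setID S1 A) -(setID S2 A) eqD !(setIidPr _).
apply: eq_card => B; rewrite inE; apply/imsetP/andP => [[S] | [BA /eqP cardB]].
  by rewrite inE => /andP [/eqP <- AS] ->; rewrite subsetDr cardsDS.
have disjAB : A :&: B = set0.
  by apply/setP => x; rewrite !inE; apply/andP => -[xA /(subsetP BA)]; rewrite inE xA.
exists (A :|: B).
  by rewrite inE subsetUl cardsU disjAB cards0 subn0 cardB; apply/andP; split=> //; lia.
apply/setP => x; rewrite !inE; case xA: (x \in A) => //=.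
by apply/negbTE/negP => /(subsetP BA); rewrite inE xA.
Qed.

Lemma card_flip_half (T : finType) (A : {set T}) (P : pred T) (g : T -> T) :
  injective g -> {in A, forall x, g x \in A} -> (forall x, P (g x) = ~~ P x) ->
  (2 * #|[set x in A | P x]| = #|A|)%N.
Proof.
move=> g_inj gA gP.
have le1 : (#|[set x in A | P x]| <= #|[set x in A | ~~ P x]|)%N.
  rewrite -(card_imset _ g_inj); apply: subset_leq_card.
  apply/subsetP => y /imsetP [x]; rewrite !inE => /andP [xA Px] ->.
  by rewrite gA // gP negbK.
have le2 : (#|[set x in A | ~~ P x]| <= #|[set x in A | P x]|)%N.
  rewrite -(card_imset _ g_inj); apply: subset_leq_card.
  apply/subsetP => y /imsetP [x]; rewrite !inE => /andP [xA nPx] ->.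
  by rewrite gA // gP.
rewrite -(cardsID [set x | P x] A).
have -> : A :&: [set x | P x] = [set x in A | P x] by apply/setP => x; rewrite !inE.
have -> : A :\: [set x | P x] = [set x in A | ~~ P x] by apply/setP => x; rewrite !inE andbC.
lia.
Qed.

Section Encoding.
Variables (n l k : nat) (G0 : 'M['F_2]_(n, l)) (G1 : 'M['F_2]_(n, k)) (m : 'cV['F_2]_k).
Implicit Types (z s : 'cV['F_2]_n) (S : {set 'I_n}).

Definition dual_in S := [set z | [&& in_dual G0 z, z != 0 & supp z \subset S]].

Definition fail_set S := [set s | stuck_on S s & ~~ encodable G0 G1 m S s].

Lemma fail_countE u :
  fail_count G0 G1 m u = (\sum_(S : {set 'I_n} | #|S| == u) #|fail_set S|)%N.
Proof. by []. Qed.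

Definition parity z s : 'F_2 := (z^T *m (G1 *m m + s)) 0 0.

Lemma parity_flip z s i : parity z (s + delta_mx i 0) = parity z s + z i 0.
Proof.
rewrite /parity addrA (mulmxDr z^T (G1 *m m + s)) [LHS]mxE -colE.
by congr (_ + _); rewrite !mxE.
Qed.

Lemma encodable_parity S s z :
  encodable G0 G1 m S s -> in_dual G0 z -> supp z \subset S -> parity z s = 0.
Proof.
case/existsP => d /forallP solves /eqP dual_z zS.
have -> : parity z s = (z^T *m (G0 *m d)) 0 0.
  rewrite /parity [LHS]mxE [RHS]mxE; apply: eq_bigr => i _.
  have [iS|iS] := boolP (i \in S); last by rewrite mxE (notin_supp zS iS) !mul0r.
  by move/implyP: (solves i) => /(_ iS) /eqP ->; rewrite [(G1 *m m + s) i 0]mxE.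
by rewrite mulmxA -[G0]trmxK -trmx_mul dual_z trmx0 mul0mx mxE.
Qed.

(* Fredholm alternative for the rows of G0 indexed by S; D projects onto them. *)
Lemma not_encodable_parity S s :
  ~~ encodable G0 G1 m S s -> exists2 z, z \in dual_in S & parity z s != 0.
Proof.
move=> not_enc; pose D := diag_mx (\row_i (i \in S)%:R : 'rV['F_2]_n).
have DE p (A : 'M_(n, p)) i j : (D *m A) i j = if i \in S then A i j else 0.
  by rewrite mul_diag_mx !mxE; case: (i \in S); rewrite ?mul1r ?mul0r.
have trD : D^T = D by rewrite tr_diag_mx.
have [|v dual_v nz_v] := fredholm_alternative (A := D *m G0) (c := D *m (G1 *m m + s)).
  move=> d; apply: contra not_enc => /eqP eq_d; apply/existsP; exists d.
  apply/forallP => i; apply/implyP => iS; apply/eqP.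
  have := congr1 (fun M : 'cV_n => M i 0) eq_d.
  by rewrite -mulmxA !DE iS => ->; rewrite mxE.
have parity_Dv : parity (D *m v) s != 0.
  rewrite /parity trmx_mul trD -mulmxA.
  by rewrite -[v]trmxK -trmx_mul mxE in nz_v.
exists (D *m v) => //; rewrite inE; apply/and3P; split.
- by rewrite /in_dual mulmxA -trD -trmx_mul dual_v.
- by apply: contraNneq parity_Dv => ->; rewrite /parity trmx0 mul0mx mxE.
- by apply/subsetP => i; rewrite inE DE; case: (i \in S); rewrite ?eqxx.
Qed.

Lemma fail_setE S : fail_set S =
  [set s | stuck_on S s & [exists z in dual_in S, parity z s != 0]].
Proof.
apply/setP => s; rewrite !inE; congr (_ && _); apply/idP/existsP.
  by case/not_encodable_parity => z zD nz; exists z; rewrite zD.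
case=> z /andP [/[!inE] /and3P [dual_z _ zS] nz]; apply: contra nz => enc.
by rewrite (encodable_parity enc dual_z zS).
Qed.

Lemma fail_set0 S : dual_in S = set0 -> fail_set S = set0.
Proof.
move=> D0; apply/setP => s; rewrite fail_setE D0 !inE.
by apply/negbTE; rewrite negb_and; apply/orP; right; apply/existsPn => z; rewrite inE.
Qed.

Lemma card_fail_set_le S : (#|fail_set S| <= 2 ^ #|S|)%N.
Proof.
rewrite -card_stuck_on; apply: subset_leq_card; apply/subsetP => s.
by rewrite !inE => /andP [].
Qed.

Lemma card_fail_set_le_dual S : (#|fail_set S| <= 2 ^ #|S| * #|dual_in S|)%N.
Proof.
have [D0|/set0Pn [z zD]] := eqVneq (dual_in S) set0.
  by rewrite fail_set0 // cards0.
apply: leq_trans (card_fail_set_le S) _; rewrite leq_pmulr // card_gt0.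
by apply/set0Pn; exists z.
Qed.

Lemma card_fail_set1 S z0 : dual_in S = [set z0] -> (2 * #|fail_set S| = 2 ^ #|S|)%N.
Proof.
move=> D1; have /[!inE] /and3P [_ nz_z0 z0S] : z0 \in dual_in S by rewrite D1 set11.
have /set0Pn [i0 /[!inE] z0_i0] : supp z0 != set0 by rewrite -supp0 (inj_eq (@supp_inj n)).
have i0S : i0 \in S by apply: (subsetP z0S); rewrite inE.
have -> : fail_set S = [set s in [set s | stuck_on S s] | parity z0 s != 0].
  apply/setP => s; rewrite fail_setE D1 !inE; congr (_ && _).
  by apply/existsP/idP => [[z /andP [/set1P -> //]] | nz]; exists z0; rewrite set11.
rewrite -card_stuck_on; apply: (@card_flip_half _ _ _ (fun s => s + delta_mx i0 0)).
- exact: addIr.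
- move=> s /[!inE] /forallP stuck; apply/forallP => i; apply/implyP => iS.
  have ne_i : i != i0 by apply: contraNneq iS => ->.
  by rewrite !mxE (negbTE ne_i) addr0; exact: (implyP (stuck i) iS).
- move=> s; rewrite parity_flip; case: (F2_cases (z0 i0 0)) z0_i0 => -> // _.
  by case: (F2_cases (parity z0 s)) => ->.
Qed.

Lemma card_fail_set_dual_le1 S : (#|dual_in S| <= 1)%N ->
  (2 * #|fail_set S| = 2 ^ #|S| * #|dual_in S|)%N.
Proof.
rewrite leq_eqVlt ltnS leqn0 => /orP [/cards1P [z0 D1] | /eqP /cards0_eq D0].
  by rewrite (card_fail_set1 D1) D1 cards1 muln1.
by rewrite fail_set0 // D0 !cards0 !muln0.
Qed.

End Encoding.

Section MinimumDistance.
Variables (n l : nat) (G0 : 'M['F_2]_(n, l)) (d0 : nat).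
Hypothesis d0_min : forall z, in_dual G0 z -> z != 0 -> (d0 <= wt z)%N.
Hypothesis d0_gt0 : (0 < d0)%N.
Implicit Types (z : 'cV['F_2]_n) (S : {set 'I_n}).

Lemma dual_in_small S : (#|S| < d0)%N -> dual_in G0 S = set0.
Proof.
move=> small; apply/setP => z; rewrite !inE; apply/negbTE/and3P => -[dual_z nz zS].
by move: (leq_trans (d0_min dual_z nz) (wt_le_card zS)); rewrite leqNgt small.
Qed.

Lemma card_dual_in_le1 S : (2 * #|S| < 3 * d0)%N -> (#|dual_in G0 S| <= 1)%N.
Proof.
move=> small; rewrite leqNgt; apply/negP => /card_gt1P [z1 [z2 []]].
rewrite !inE => /and3P [dual1 nz1 z1S] /and3P [dual2 nz2 z2S] ne12.
have dual12 : in_dual G0 (z1 - z2) by rewrite /in_dual mulmxBr (eqP dual1) (eqP dual2) subrr.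
have nz12 : z1 - z2 != 0 by rewrite subr_eq0.
have := leq_add (leq_add (d0_min dual1 nz1) (d0_min dual2 nz2)) (d0_min dual12 nz12).
move=> /leq_trans /(_ (wt_triangle z1S z2S)); lia.
Qed.

Lemma sum_card_dual_in (u : nat) :
  (\sum_(S : {set 'I_n} | #|S| == u) #|dual_in G0 S| =
   \sum_(z | [&& in_dual G0 z, z != 0%R & wt z <= u]) 'C(n - wt z, u - wt z))%N.
Proof.
rewrite (eq_bigr _ (fun S _ => card_indicator (dual_in G0 S))) exchange_big /=.
rewrite [RHS]big_mkcond; apply: eq_bigr => z _.
have [dz|ndz] := boolP (in_dual G0 z && (z != 0)); last first.
  by rewrite andbA (negbTE ndz) big1 // => S _; rewrite inE andbA (negbTE ndz).
transitivity #|[set S : {set 'I_n} | (#|S| == u) && (supp z \subset S)]|.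
  rewrite card_indicator big_mkcond; apply: eq_bigr => S _.
  by rewrite !inE andbA dz; case: (#|S| == u).
rewrite andbA dz /=; case: leqP => [le_wu | lt_uw].
  by rewrite card_supersets // card_ord.
apply: eq_card0 => S; rewrite inE; apply/andP => -[/eqP cardS zS].
by move: (wt_le_card zS); rewrite cardS leqNgt lt_uw.
Qed.

Lemma sum_weight_enumerator (u : nat) :
  (\sum_(d0 <= w < u.+1) B0 G0 w * 'C(n - w, u - w) =
   \sum_(z | [&& in_dual G0 z, z != 0%R & wt z <= u]) 'C(n - wt z, u - wt z))%N.
Proof.
under eq_bigr do rewrite /B0 card_indicator big_distrl /=.
rewrite exchange_big [RHS]big_mkcond; apply: eq_bigr => z _ /=.
transitivity (\sum_(d0 <= w < u.+1 | w == wt z) in_dual G0 z * 'C(n - w, u - w))%N.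
  rewrite [RHS]big_mkcond; apply: eq_bigr => w _; rewrite inE eq_sym.
  by case: (w == wt z); rewrite ?andbT ?andbF.
rewrite big_nat1_eq; have [dz|] := boolP (in_dual G0 z); last by case: ifP.
have -> : (z != 0) = (d0 <= wt z)%N.
  apply/idP/idP => [|le_d0]; first exact: d0_min.
  by apply: contraTneq le_d0 => ->; rewrite wtE supp0 cards0 -ltnNge.
by rewrite ltnS mul1n.
Qed.

End MinimumDistance.

Lemma double_lt_triple d0 u :
  (0 < d0)%N -> (u <= d0 + (d0.-1)./2)%N -> (2 * u < 3 * d0)%N.
Proof.
move=> d0_gt0; have : ((d0.-1)./2.*2 <= d0.-1)%N by rewrite -[leqRHS]odd_double_half leq_addl.
rewrite -muln2; move: (d0.-1)./2 => t; lia.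
Qed.

Section FailCount.
Variables (n l k : nat) (G0 : 'M['F_2]_(n, l)) (G1 : 'M['F_2]_(n, k)) (m : 'cV['F_2]_k).
Variables (d0 u : nat).
Hypothesis d0_min : forall z, in_dual G0 z -> z != 0 -> (d0 <= wt z)%N.
Hypothesis d0_gt0 : (0 < d0)%N.

Let weight_sum := (\sum_(d0 <= w < u.+1) B0 G0 w * 'C(n - w, u - w))%N.

Lemma weight_sumE : weight_sum = (\sum_(S : {set 'I_n} | #|S| == u) #|dual_in G0 S|)%N.
Proof. by rewrite /weight_sum sum_card_dual_in (sum_weight_enumerator d0_min). Qed.

Lemma fail_count_eq0 : (u < d0)%N -> fail_count G0 G1 m u = 0%N.
Proof.
move=> lt_ud; rewrite fail_countE big1 // => S /eqP cardS.
by rewrite fail_set0 ?cards0 // (dual_in_small d0_min) // cardS.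
Qed.

Lemma fail_count_double : (2 * u < 3 * d0)%N ->
  (2 * fail_count G0 G1 m u = 2 ^ u * weight_sum)%N.
Proof.
move=> small; rewrite fail_countE weight_sumE !big_distrr /=; apply: eq_bigr => S /eqP cardS.
by rewrite -cardS card_fail_set_dual_le1 // (card_dual_in_le1 d0_min) // cardS.
Qed.

Lemma fail_count_le_weight_sum : (fail_count G0 G1 m u <= 2 ^ u * weight_sum)%N.
Proof.
rewrite fail_countE weight_sumE big_distrr; apply: leq_sum => S /eqP <-.
exact: card_fail_set_le_dual.
Qed.

Lemma fail_count_le_total : (fail_count G0 G1 m u <= 'C(n, u) * 2 ^ u)%N.
Proof.
rewrite -[n in 'C(n, u)]card_ord -card_draws -sum1_card big_distrl /=.
rewrite (eq_bigl (fun S : {set 'I_n} => #|S| == u)) => [|S]; last by rewrite inE.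
rewrite fail_countE.
by apply: leq_sum => S /eqP <-; rewrite mul1n card_fail_set_le.
Qed.

End FailCount.

Theorem theorem2 (n l k : nat) (G0 : 'M['F_2]_(n, l)) (G1 : 'M['F_2]_(n, k))
  (m : 'cV['F_2]_k) (d0 : nat)
  (Hd0_attained : exists x : 'cV['F_2]_n, [/\ in_dual G0 x, x != 0 & wt x = d0])
  (Hd0_min : forall x : 'cV['F_2]_n, in_dual G0 x -> x != 0 -> (d0 <= wt x)%N)
  (u : nat) (Hu1 : (1 <= u)%N) (Hun : (u <= n)%N) :
  let t0 := (d0.-1)./2 in
  [/\ (u < d0)%N -> P_fail G0 G1 m u = 0,
      (d0 <= u <= d0 + t0)%N -> P_fail G0 G1 m u = 2^-1 * ratio_bound G0 d0 u
    & (d0 + t0 < u)%N -> P_fail G0 G1 m u <= Num.min (ratio_bound G0 d0 u) 1].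
Proof.
move=> t0; have d0_gt0 : (0 < d0)%N.
  case: Hd0_attained => z [_ nz <-].
  by rewrite lt0n wtE cards_eq0 -supp0 (inj_eq (@supp_inj n)).
have Cu_neq0 : ('C(n, u))%:R != 0 :> rat by rewrite pnatr_eq0 -lt0n bin_gt0.
have pow_neq0 : (2 ^ u)%:R != 0 :> rat by rewrite pnatr_eq0 -lt0n expn_gt0.
rewrite /P_fail /ratio_bound; set N := (\sum_(d0 <= w < u.+1) _)%N; split.
- by move=> lt_ud; rewrite (fail_count_eq0 G1 m Hd0_min lt_ud) mul0r.
- move=> /andP [_ /(double_lt_triple d0_gt0) small].
  have eq2 : 2 * (fail_count G0 G1 m u)%:R = (2 ^ u)%:R * N%:R :> rat.
    by rewrite -!natrM (fail_count_double G1 m Hd0_min d0_gt0 small).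
  have -> : (fail_count G0 G1 m u)%:R = (2 ^ u)%:R * N%:R / 2 :> rat by rewrite -eq2; field.
  by rewrite natrM; field; apply/andP.
- move=> _; have D_gt0 : 0 < ('C(n, u) * 2 ^ u)%:R :> rat.
    by rewrite ltr0n muln_gt0 bin_gt0 Hun expn_gt0.
  rewrite le_min; apply/andP; split; last first.
    by rewrite ler_pdivrMr // mul1r ler_nat fail_count_le_total.
  have -> : N%:R / ('C(n, u))%:R = (2 ^ u * N)%:R / ('C(n, u) * 2 ^ u)%:R :> rat.
    by rewrite !natrM; field; apply/andP.
  by rewrite ler_pM2r ?invr_gt0 // ler_nat (fail_count_le_weight_sum G1 m u Hd0_min d0_gt0).
Qed.
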